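(* For unweighted directed graphs and any threshold $\zeta\ge 1$, there exists an $O(\zeta)$-round deterministic $\mathsf{CONGEST}$ algorithm that lets the first endpoint $v_i$ of each edge $e=(v_i,v_{i+1})$ of $P$ compute the shortest length of a replacement path for $e$ with a short detour (i.e., with a detour of at most $\zeta$ hops).
   Context: $G=(V,E)$ is an unweighted directed graph with $n=|V|$ which is also the communication network (communication over edges in both directions). $\mathsf{CONGEST}$: synchronous rounds, each vertex may send an $O(\log n)$-bit message to each neighbour per round, unique identifiers, unlimited local computation. $P=(s=v_0,v_1,\dots,v_{h_{st}}=t)$ is a given shortest $s$-$t$ path. Initially the endpoints of each edge of $P$ know the edge belongs to $P$, and each vertex $v_i$ of $P$ knows its index $i$, $\mathrm{dist}(s,v_i)$ and $\mathrm{dist}(v_i,t)$. A replacement path for $e=(v_i,v_{i+1})$ of the considered form is an $s$-$t$ path consisting of the subpath of $P$ from $s$ to $v_j$, then a path (the detour) from $v_j$ to $v_l$ sharing no edge with $P$, then the subpath of $P$ from $v_l$ to $t$, where $j\le i$ and $l\ge i+1$. The detour is short if it has at most $\zeta$ edges. The required output is the minimum length over all such replacement paths for $e$ with a short detour ($\infty$ if none exists). *)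

From mathcomp Require Import all_boot.
Unset Printing Implicit Defensive.

Definition nbits (x : nat) : nat := (trunc_log 2 x).+1.

Record local_input := LocalInput {
  li_n     : nat;
  li_zeta  : nat;
  li_id    : nat;
  li_out   : seq nat;
  li_in    : seq nat;
  li_pos   : option (nat * nat * nat);    (* Some (i, dist(s,v_i), dist(v_i,t)) if v = v_i on P *)
  li_pnext : option nat;                  (* id of v_{i+1}: edge (v_i,v_{i+1}) is on P *)
  li_pprev : option nat                   (* id of v_{i-1}: edge (v_{i-1},v_i) is on P *)
}.

(* A deterministic CONGEST algorithm: arbitrary local state (unlimited local
   computation), a message (bit string) to each neighbour (given by its id) per
   round, a state update from the id-tagged received messages, and an output. *)
Record congest_algo := CongestAlgo {
  St       : Type;
  alg_init : local_input -> St;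
  alg_send : St -> nat -> seq bool;
  alg_recv : St -> seq (nat * seq bool) -> St;
  alg_out  : St -> option nat             (* None encodes infinity *)
}.

Section Model.
Variable n : nat.
Variable g : rel 'I_n.

(* communication network: edges used in both directions *)
Definition comm (u v : 'I_n) : bool := (u != v) && (g u v || g v u).

Fixpoint run (A : congest_algo) (idf : 'I_n -> nat)
    (inp : 'I_n -> local_input) (r : nat) : 'I_n -> St A :=
  match r with
  | 0 => fun v => alg_init A (inp v)
  | r'.+1 => let c := run A idf inp r' in
      fun v => alg_recv A (c v)
        [seq (idf u, alg_send A (c u) (idf v)) | u <- enum 'I_n & comm u v]
  end.

(* The given path P = s :: ps = (v_0, ..., v_h), h = size ps. *)
Variables (s : 'I_n) (ps : seq 'I_n).
Definition pv (k : nat) : 'I_n := nth s (s :: ps) k.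
Definition hst : nat := size ps.

Definition shortest_path : Prop :=
  path g s ps /\
  forall w : seq 'I_n, path g s w -> last s w = last s ps -> size ps <= size w.

Definition onP (x y : 'I_n) : bool :=
  has (fun k => (pv k == x) && (pv k.+1 == y)) (iota 0 hst).

(* Local inputs: for v = v_k on P, index k, dist(s,v_k) = k and
   dist(v_k,t) = h - k (P is shortest), and the ids of its P-neighbours. *)
Definition input (idf : 'I_n -> nat) (zeta : nat) (v : 'I_n) : local_input :=
  let k := index v (s :: ps) in
  let onp := v \in s :: ps in
  LocalInput n zeta (idf v)
    [seq idf u | u <- enum 'I_n & g v u]
    [seq idf u | u <- enum 'I_n & g u v]
    (if onp then Some (k, k, hst - k) else None)
    (if onp && (k < hst) then Some (idf (pv k.+1)) else None)
    (if onp && (0 < k) then Some (idf (pv k.-1)) else None).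

(* There is a replacement path for e_i = (v_i, v_{i+1}) of length len of the
   form P[s,v_j] . D . P[v_l,t], j <= i < l, where the detour D from v_j to
   v_l is a (simple) path in g with at most zeta edges sharing no edge with P. *)
Definition short_rp (zeta i len : nat) : Prop :=
  exists (j l : nat) (d : seq 'I_n),
    [/\ j <= i, i < l <= hst, path g (pv j) d & last (pv j) d = pv l] /\
    [/\ uniq (pv j :: d), size d <= zeta,
        all (fun e => ~~ onP e.1 e.2) (zip (pv j :: d) d)
      & len = j + size d + (hst - l)].

Definition rp_value (zeta i : nat) (o : option nat) : Prop :=
  match o with
  | Some m => short_rp zeta i m /\ forall m', short_rp zeta i m' -> m <= m'
  | None => forall m, ~ short_rp zeta i m
  end.

End Model.
Arguments comm {n} g u v.
Arguments pv {n} s ps k.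
Arguments run {n} g A idf inp r _.
Arguments shortest_path {n} g s ps.
Arguments input {n} g s ps idf zeta v.
Arguments rp_value {n} g s ps zeta i o.
Arguments short_rp {n} g s ps zeta i len.

From Pilot Require Import Defs.
From mathcomp Require Import all_boot zify.

(* In the first zeta rounds every vertex x learns, for each r <= zeta, the
   smallest index j such that some path of at most r edges avoiding P leads
   from v_j to x (a Bellman-Ford relaxation over the non-P edges).  With this
   history v_l knows the best replacement path whose detour ends at v_l, for
   every edge e_i with l - zeta <= i < l.  In the next zeta rounds these
   values are pipelined backwards along P, v_l forwarding in round zeta + sx
   the minimum for the edge e_(l+sx-zeta); the minimum for e_i thus reaches
   v_i exactly after 2 zeta rounds, and since P is shortest a detour of at
   most zeta edges starting at or before v_i ends at or before v_(i+zeta), so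
   no candidate is missed.  Every message is one number below 2 n, hence
   O(log n) bits. *)

Fixpoint bits_of (w x : nat) : seq bool :=
  if w is w'.+1 then odd x :: bits_of w' x./2 else [::].

Fixpoint nat_of_bits (bs : seq bool) : nat :=
  if bs is b :: bs' then b + (nat_of_bits bs').*2 else 0.

Lemma size_bits_of w x : size (bits_of w x) = w.
Proof. by elim: w x => //= w IH x; rewrite IH. Qed.

Lemma bits_ofK w x : x < 2 ^ w -> nat_of_bits (bits_of w x) = x.
Proof.
elim: w x => [|w IH] x /=; first by rewrite expn0 ltnS leqn0 => /eqP->.
by move=> lt_x; rewrite IH ?odd_double_half // ltn_half_double -mul2n -expnS.
Qed.

Lemma foldr_minn_ub {B : nat} {l : seq nat} : foldr minn B l <= B.
Proof. by elim: l => //= a l IH; apply: leq_trans (geq_minr _ _) IH. Qed.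

Lemma foldr_minn_le {B y : nat} {l : seq nat} : y \in l -> foldr minn B l <= y.
Proof.
elim: l => //= a l IH; rewrite inE => /orP[/eqP->|/IH le_y]; first exact: geq_minl.
exact: leq_trans (geq_minr _ _) le_y.
Qed.

Lemma foldr_minn_mem {B : nat} {l : seq nat} : foldr minn B l < B -> foldr minn B l \in l.
Proof.
elim: l => [|a l IH] /=; first by rewrite ltnn.
by rewrite inE; case: (leqP a (foldr minn B l)) => [_ _|_ /IH->]; rewrite ?eqxx ?orbT.
Qed.

(* Indices on P are below n and lengths of simple replacement paths below 2 n,
   so n and 2 n encode infinity.  [st_starts] records [st_start] after each of
   the first zeta rounds; [st_best] is the value last received from the
   successor on P. *)
Record rp_state := RPState {
  st_input : local_input;
  st_round : nat;
  st_start : nat;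
  st_starts : seq nat;
  st_best : nat
}.

Definition msg_width (N : nat) : nat := (nbits N).+1.

(* Length of the best replacement path for e_i whose detour ends at v_l, when
   dt = dist(v_l, t) and starts`_r is the least j such that a detour of at
   most r edges leads from v_j to v_l. *)
Definition best_via (inf dt : nat) (starts : seq nat) (i : nat) : nat :=
  foldr minn inf [seq if nth 0 starts r <= i then nth 0 starts r + r + dt else inf
                 | r <- iota 0 (size starts)].

Definition init_state (li : local_input) : rp_state :=
  let j := if li_pos li is Some (k, _, _) then k else li_n li in
  RPState li 0 j [:: j] (2 * li_n li).

Definition candidate (st : rp_state) (i : nat) : nat :=
  let li := st_input st in
  if li_pos li is Some (_, _, dt) then best_via (2 * li_n li) dt (st_starts st) i
  else 2 * li_n li.

Definition message (st : rp_state) : nat :=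
  let li := st_input st in
  if st_round st < li_zeta li then st_start st
  else if li_pos li is Some (l, _, _) then
    minn (candidate st (l + (st_round st - li_zeta li) - li_zeta li)) (st_best st)
  else 2 * li_n li.

Definition send_state (st : rp_state) (_ : nat) : seq bool :=
  bits_of (msg_width (li_n (st_input st))) (message st).

Definition msg_from (id : nat) (msgs : seq (nat * seq bool)) : seq bool :=
  head [::] [seq p.2 | p <- msgs & p.1 == id].

Definition relaxed_start (li : local_input) (j : nat) (msgs : seq (nat * seq bool)) : nat :=
  minn j (foldr minn (li_n li)
    [seq nat_of_bits p.2 | p <- msgs & (p.1 \in li_in li) && (Some p.1 != li_pprev li)]).

Definition received_best (li : local_input) (msgs : seq (nat * seq bool)) : nat :=
  if li_pnext li is Some id then nat_of_bits (msg_from id msgs) else 2 * li_n li.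

Definition recv_state (st : rp_state) (msgs : seq (nat * seq bool)) : rp_state :=
  let li := st_input st in
  if st_round st < li_zeta li then
    let j := relaxed_start li (st_start st) msgs in
    RPState li (st_round st).+1 j (rcons (st_starts st) j) (st_best st)
  else RPState li (st_round st).+1 (st_start st) (st_starts st) (received_best li msgs).

Definition output_state (st : rp_state) : option nat :=
  if st_best st < 2 * li_n (st_input st) then Some (st_best st) else None.

Definition rp_algo : congest_algo :=
  CongestAlgo rp_state init_state send_state recv_state output_state.

Lemma lt_pow_msg_width N v : v <= 2 * N -> v < 2 ^ msg_width N.
Proof. by rewrite /msg_width /nbits expnS; have := trunc_log_ltn N (isT : 1 < 2); lia. Qed.

Lemma send_stateK st w : message st <= 2 * li_n (st_input st) ->
  nat_of_bits (send_state st w) = message st.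
Proof. by move=> le_msg; rewrite bits_ofK // lt_pow_msg_width. Qed.

Section AlgorithmSteps.
Variables (li : local_input) (r j : nat) (js : seq nat) (b : nat).
Variable msgs : seq (nat * seq bool).

Lemma recv_state_early : r < li_zeta li ->
  recv_state (RPState li r j js b) msgs =
  RPState li r.+1 (relaxed_start li j msgs) (rcons js (relaxed_start li j msgs)) b.
Proof. by rewrite /recv_state /= => ->. Qed.

Lemma recv_state_late : li_zeta li <= r ->
  recv_state (RPState li r j js b) msgs = RPState li r.+1 j js (received_best li msgs).
Proof. by rewrite /recv_state /= ltnNge => ->. Qed.

Lemma message_early : r < li_zeta li -> message (RPState li r j js b) = j.
Proof. by rewrite /message /= => ->. Qed.

Lemma message_late : li_zeta li <= r -> message (RPState li r j js b) =
  if li_pos li is Some (l, _, dt) then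
    minn (best_via (2 * li_n li) dt js (l + (r - li_zeta li) - li_zeta li)) b
  else 2 * li_n li.
Proof. by rewrite /message /candidate /= ltnNge => ->; case: (li_pos li) => [[[]]|]. Qed.

End AlgorithmSteps.

(** * Detours around the shortest path *)

Lemma size_uniq_ord n (x : 'I_n) (d : seq 'I_n) : uniq (x :: d) -> size d < n.
Proof.
by move=> /uniq_leq_size/(_ (fun y _ => mem_enum 'I_n y)); rewrite size_enum_ord.
Qed.

Lemma last_take_nth {T : Type} (x : T) {q : seq T} {k : nat} :
  k <= size q -> last x (take k q) = nth x (x :: q) k.
Proof. by elim: q k x => [|a q IH] [|k] //= x lt_k; rewrite IH // (set_nth_default a). Qed.

Section ReplacementPaths.
Variables (n : nat) (g : rel 'I_n) (s : 'I_n) (ps : seq 'I_n).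
Variables (idf : 'I_n -> nat) (zeta : nat).
Hypothesis idf_inj : injective idf.
Hypothesis sp_P : shortest_path g s ps.
Hypothesis zeta_gt0 : 1 <= zeta.

Local Notation h := (size ps).
Local Notation pv := (pv s ps).
Local Notation onP := (onP n s ps).

Lemma shortest_path_uniq : uniq (s :: ps).
Proof.
case: sp_P => path_P; case: (shortenP path_P) => p' path_p' uniq_p' sub_p' min_P.
apply: (leq_size_uniq uniq_p'); last exact: min_P.
by move=> x; rewrite !inE => /predU1P[->|/sub_p'->]; rewrite ?eqxx ?orbT.
Qed.

Lemma size_P_lt : h < n.
Proof. exact: size_uniq_ord shortest_path_uniq. Qed.

Lemma pv_mem k : pv k \in s :: ps.
Proof.
rewrite /Defs.pv; case: (ltnP k (size (s :: ps))) => [|le_k]; first exact: mem_nth.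
by rewrite nth_default // mem_head.
Qed.

Lemma pv_index {x} : x \in s :: ps -> pv (index x (s :: ps)) = x.
Proof. exact: nth_index. Qed.

Lemma index_P_le {x} : x \in s :: ps -> index x (s :: ps) <= h.
Proof. by rewrite -index_mem. Qed.

Lemma index_pv k : k <= h -> index (pv k) (s :: ps) = k.
Proof. by move=> le_k; rewrite index_uniq // shortest_path_uniq. Qed.

Lemma eq_pv k k' : k <= h -> k' <= h -> (pv k == pv k') = (k == k').
Proof. by move=> le_k le_k'; rewrite nth_uniq // shortest_path_uniq. Qed.

Lemma g_pv k : k < h -> g (pv k) (pv k.+1).
Proof. by case: sp_P => /(pathP s) path_P _ /path_P. Qed.

Lemma onP_pv u k : k <= h -> onP u (pv k) = (0 < k) && (u == pv k.-1).
Proof.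
move=> le_k; apply/hasP/andP => [[k']|[k_gt0 /eqP->]].
  by rewrite mem_iota add0n => lt_k' /andP[/eqP<-]; rewrite eq_pv // => /eqP<-.
by exists k.-1; rewrite ?mem_iota ?prednK ?eqxx //; lia.
Qed.

Lemma onP_notin u x : x \notin s :: ps -> onP u x = false.
Proof. by apply: contraNF => /hasP[k _ /andP[_ /eqP<-]]; rewrite pv_mem. Qed.

(* Replacing P[v_j, v_l] by a path d gives an s-t walk, which is no shorter than P. *)
Lemma detour_end_le {j l d} : j <= h -> l <= h -> path g (pv j) d ->
  last (pv j) d = pv l -> l <= j + size d.
Proof.
move=> le_j le_l path_d last_d; case: sp_P => path_P min_P.
have last_take k : k <= h -> last s (take k ps) = pv k by exact: last_take_nth.
have split_P k : k <= h ->
    [/\ path g s (take k ps), path g (pv k) (drop k ps) & last (pv k) (drop k ps) = last s ps].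
  move=> le_k; rewrite -(last_take k le_k) -last_cat cat_take_drop.
  by move: path_P; rewrite -{1}(cat_take_drop k ps) cat_path => /andP[].
have [path_pre _ _] := split_P j le_j; have [_ path_suf last_suf] := split_P l le_l.
have := min_P (take j ps ++ d ++ drop l ps).
rewrite !cat_path !last_cat (last_take j le_j) path_pre path_d last_d path_suf last_suf.
by rewrite !size_cat size_takel // size_drop => /(_ isT erefl); lia.
Qed.

Definition detour_edge (u v : 'I_n) : bool := [&& u != v, g u v & ~~ onP u v].

Lemma uniq_detour_pathE x d : uniq (x :: d) ->
  path detour_edge x d = path g x d && all (fun e => ~~ onP e.1 e.2) (zip (x :: d) d).
Proof.
elim: d x => //= y d IH x /andP[x_notin uniq_d].
have x_ne_y : x != y by apply: contraNneq x_notin => ->; rewrite mem_head.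
rewrite IH // /detour_edge x_ne_y /=.
by case: (g x y); case: (onP x y); case: (path g y d).
Qed.

Fixpoint min_start (r : nat) (x : 'I_n) : nat :=
  if r is r'.+1 then
    minn (min_start r' x) (foldr minn n [seq min_start r' u | u <- enum 'I_n & detour_edge u x])
  else if x \in s :: ps then index x (s :: ps) else n.

Lemma min_start0 x : min_start 0 x = if x \in s :: ps then index x (s :: ps) else n.
Proof. by []. Qed.

Lemma min_start_le_n r x : min_start r x <= n.
Proof.
elim: r x => [|r IH] x /=; last exact: leq_trans (geq_minl _ _) (IH x).
by case: ifP => // /index_P_le le_x; apply: leq_trans le_x (ltnW size_P_lt).
Qed.

Lemma min_start_path {r x} : min_start r x < n -> min_start r x <= h /\
  exists d, [/\ path detour_edge (pv (min_start r x)) d, last (pv (min_start r x)) d = x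
              & size d <= r].
Proof.
elim: r x => [|r IH] x /=.
  case: ifP => [x_in _|_]; last by rewrite ltnn.
  by split; [exact: index_P_le | exists [::]; rewrite /= pv_index].
set F := foldr _ _ _; case: (leqP (min_start r x) F) => _.
  by move=> /IH[le_j [d [path_d last_d size_d]]]; split=> //; exists d; split=> //; lia.
move=> lt_F; have /mapP[u] := foldr_minn_mem lt_F.
rewrite mem_filter => /andP[ux _] F_u; move: lt_F; rewrite /F F_u.
move=> /IH[le_j [d [path_d last_d size_d]]]; split=> //.
by exists (rcons d x); rewrite rcons_path last_rcons size_rcons path_d last_d ux.
Qed.

Lemma min_start_le {r j x d} : j <= h -> path detour_edge (pv j) d ->
  last (pv j) d = x -> size d <= r -> min_start r x <= j.
Proof.
elim: r x d => [|r IH] x d le_j.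
  by case: d => // _ <- _; rewrite min_start0 pv_mem index_pv.
move=> path_d last_d; rewrite leq_eqVlt ltnS => /predU1P[size_d|]; last first.
  by move=> /(IH _ _ le_j path_d last_d); apply: leq_trans (geq_minl _ _).
case/lastP: d path_d last_d size_d => [//|d y].
rewrite rcons_path last_rcons size_rcons => /andP[path_d edge_y] <- [size_d].
apply: leq_trans (geq_minr _ _) (leq_trans _ (IH _ _ le_j path_d erefl (eq_leq size_d))).
by apply/foldr_minn_le/map_f; rewrite mem_filter edge_y mem_enum.
Qed.

Definition starts (x : 'I_n) : seq nat := [seq min_start r x | r <- iota 0 zeta.+1].

Lemma size_starts x : size (starts x) = zeta.+1.
Proof. by rewrite size_map size_iota. Qed.

Lemma nth_starts x r : r <= zeta -> nth 0 (starts x) r = min_start r x.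
Proof. by move=> le_r; rewrite (nth_map 0) ?size_iota // nth_iota. Qed.

Definition best_at (l i : nat) : nat := best_via (2 * n) (h - l) (starts (pv l)) i.

Lemma best_at_le {l i r} : r <= zeta -> min_start r (pv l) <= i ->
  best_at l i <= min_start r (pv l) + r + (h - l).
Proof.
move=> le_r le_i; apply: foldr_minn_le; apply/mapP; exists r.
  by rewrite size_starts mem_iota.
by rewrite nth_starts // le_i.
Qed.

Lemma best_at_witness {l i} : best_at l i < 2 * n -> exists r,
  [/\ r <= zeta, min_start r (pv l) <= i & best_at l i = min_start r (pv l) + r + (h - l)].
Proof.
rewrite /best_at /best_via size_starts => lt_best.
have /mapP[r] := foldr_minn_mem lt_best; rewrite mem_iota ltnS => le_r.
rewrite nth_starts //; case: ifP => [le_i ->|_ best_inf]; first by exists r.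
by rewrite best_inf ltnn in lt_best.
Qed.

(* Value forwarded by v_l in round zeta + sx: it concerns the edge
   e_(l+sx-zeta) and collects best_at over v_l, ..., v_(l+sx).  The index is
   truncated when l + sx < zeta, but such values never reach an output. *)
Fixpoint pipelined (sx l : nat) : nat :=
  minn (best_at l (l + sx - zeta))
       (if sx is sx'.+1 then if l < h then pipelined sx' l.+1 else 2 * n else 2 * n).

Lemma pipelined_ub sx l : pipelined sx l <= 2 * n.
Proof. by case: sx => [|sx] /=; apply: leq_trans (geq_minl _ _) foldr_minn_ub. Qed.

Lemma pipelined_le sx l l' : l <= l' <= l + sx -> l' <= h ->
  pipelined sx l <= best_at l' (l + sx - zeta).
Proof.
elim: sx l => [|sx IH] l range_l' le_l' /=.
  by rewrite (_ : l' = l); [exact: geq_minl | lia].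
have [lt_l|ge_l] := ltnP l l'; last by rewrite (_ : l' = l); [exact: geq_minl | lia].
rewrite (leq_trans lt_l le_l') -addSnnS.
by apply: leq_trans (geq_minr _ _) (IH _ _ le_l'); lia.
Qed.

Lemma pipelined_witness {sx l} : l <= h -> pipelined sx l < 2 * n -> exists l',
  [/\ l <= l' <= l + sx, l' <= h & pipelined sx l = best_at l' (l + sx - zeta)].
Proof.
elim: sx l => [|sx IH] l le_l /=.
  by rewrite (minn_idPl foldr_minn_ub) => _; exists l; split=> //; lia.
case: (leqP (best_at l _) _) => _ lt_pipe; first by exists l; split=> //; lia.
case: ifP lt_pipe => [lt_l|_]; last by rewrite ltnn.
move=> /(IH _ lt_l)[l' [range_l' le_l' ->]]; exists l'.
by rewrite addSnnS; split=> //; lia.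
Qed.

Lemma pipelined_final_le i l : i < l <= i + zeta -> l <= h ->
  pipelined zeta.-1 i.+1 <= best_at l i.
Proof.
move=> range_l le_l; have := pipelined_le zeta.-1 i.+1 l _ le_l.
by rewrite (_ : i.+1 + zeta.-1 - zeta = i); [apply; lia | lia].
Qed.

Lemma pipelined_final_witness {i} : i < h -> pipelined zeta.-1 i.+1 < 2 * n -> exists l,
  [/\ i < l <= i + zeta, l <= h & pipelined zeta.-1 i.+1 = best_at l i].
Proof.
move=> lt_i /(pipelined_witness lt_i)[l [range_l le_l ->]]; exists l.
by rewrite (_ : i.+1 + zeta.-1 - zeta = i); [split=> //; lia | lia].
Qed.

Lemma short_rp_lt {i m} : short_rp g s ps zeta i m -> m < 2 * n.
Proof.
move=> [j [l [d [[le_j /andP[lt_l le_l] _ _] [/size_uniq_ord lt_d _ _ ->]]]]].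
by have := size_P_lt; rewrite /hst in le_l *; lia.
Qed.

Lemma pipelined_le_short_rp {i m} : short_rp g s ps zeta i m -> pipelined zeta.-1 i.+1 <= m.
Proof.
move=> [j [l [d [[le_j /andP[lt_l le_l] path_d last_d] [uniq_d size_d off_P ->]]]]].
rewrite /hst in le_l *; have le_jh : j <= h by lia.
have reach_l := detour_end_le le_jh le_l path_d last_d.
have detour_d : path detour_edge (pv j) d by rewrite uniq_detour_pathE ?path_d.
have le_start := min_start_le le_jh detour_d last_d (leqnn _).
have best_l := best_at_le size_d (leq_trans le_start le_j).
have pipe_l : pipelined zeta.-1 i.+1 <= best_at l i by apply: pipelined_final_le => //; lia.
lia.
Qed.

Lemma pipelined_short_rp {i} : i < h -> pipelined zeta.-1 i.+1 < 2 * n ->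
  exists2 m, short_rp g s ps zeta i m & m <= pipelined zeta.-1 i.+1.
Proof.
move=> lt_i lt_pipe; have [l [range_l le_l pipe_l]] := pipelined_final_witness lt_i lt_pipe.
rewrite pipe_l in lt_pipe *.
have [r [le_r le_i ->]] := best_at_witness lt_pipe.
have lt_j : min_start r (pv l) < n by have := size_P_lt; lia.
have [le_j [d [path_d last_d size_d]]] := min_start_path lt_j.
move: last_d; case: (shortenP path_d) => d' path_d' uniq_d' sub_d' last_d'.
have size_d' : size d' <= size d by apply: uniq_leq_size sub_d'; case/andP: uniq_d'.
move: path_d'; rewrite uniq_detour_pathE // => /andP[path_d' off_P].
exists (min_start r (pv l) + size d' + (h - l)); last by lia.
exists (min_start r (pv l)), l, d'; rewrite /hst; split; split=> //; try lia.
exact: leq_trans size_d' (leq_trans size_d le_r).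
Qed.

Lemma rp_value_pipelined i : i < h -> rp_value g s ps zeta i
  (if pipelined zeta.-1 i.+1 < 2 * n then Some (pipelined zeta.-1 i.+1) else None).
Proof.
move=> lt_i; case: ifP => [lt_pipe|/negbT ge_pipe] /=; last first.
  by move=> m rp_m; have := short_rp_lt rp_m; have := pipelined_le_short_rp rp_m; lia.
have [m rp_m le_m] := pipelined_short_rp lt_i lt_pipe.
have eq_m : pipelined zeta.-1 i.+1 = m.
  by apply/eqP; rewrite eqn_leq le_m pipelined_le_short_rp.
by rewrite eq_m; split=> // m' /pipelined_le_short_rp; rewrite eq_m.
Qed.

Local Notation inp := (input g s ps idf zeta).
Local Notation state := (run g rp_algo idf inp).

Lemma run_succ r x : state r.+1 x = recv_state (state r x)
  [seq (idf u, send_state (state r u) (idf x)) | u <- enum 'I_n & comm g u x].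
Proof. by []. Qed.

Lemma run_input r x : st_input (state r x) = inp x.
Proof. by elim: r x => [//|r IH] x; rewrite run_succ /recv_state; case: ifP => _; apply: IH. Qed.

Lemma size_send r u w : size (send_state (state r u) w) = msg_width n.
Proof. by rewrite /send_state size_bits_of run_input. Qed.

Lemma input_pos x : li_pos (inp x) =
  if x \in s :: ps then Some (index x (s :: ps), index x (s :: ps), h - index x (s :: ps))
  else None.
Proof. by []. Qed.

Lemma input_pnext x : li_pnext (inp x) =
  if (x \in s :: ps) && (index x (s :: ps) < h) then Some (idf (pv (index x (s :: ps)).+1))
  else None.
Proof. by []. Qed.

Lemma input_pprev x : li_pprev (inp x) =
  if (x \in s :: ps) && (0 < index x (s :: ps)) then Some (idf (pv (index x (s :: ps)).-1))
  else None.
Proof. by []. Qed.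

Lemma detour_msg_filter u x :
  (idf u \in li_in (inp x)) && (Some (idf u) != li_pprev (inp x)) && comm g u x
  = detour_edge u x.
Proof.
have -> : (Some (idf u) != li_pprev (inp x)) = ~~ onP u x.
  rewrite input_pprev; case x_in: (x \in s :: ps); last by rewrite onP_notin ?x_in.
  rewrite -[in RHS](pv_index x_in) (onP_pv u _ (index_P_le x_in)).
  by case: (0 < _) => //=; rewrite (inj_eq (@Some_inj _)) (inj_eq idf_inj).
rewrite /= (mem_map idf_inj) mem_filter mem_enum andbT /detour_edge /comm.
by case: (u != x); case: (g u x); case: (g x u); case: (onP u x).
Qed.

Lemma run_phase1 r x : r <= zeta ->
  state r x = RPState (inp x) r (min_start r x) [seq min_start k x | k <- iota 0 r.+1] (2 * n).
Proof.
elim: r x => [|r IH] x lt_r; first by rewrite /= /init_state /=; case: (x \in s :: ps).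
have {}IH y := IH y (ltnW lt_r).
have -> : iota 0 r.+2 = rcons (iota 0 r.+1) r.+1 by rewrite -addn1 iotaD cats1.
rewrite run_succ IH recv_state_early // map_rcons.
suff -> : relaxed_start (inp x) (min_start r x)
  [seq (idf u, send_state (state r u) (idf x)) | u <- enum 'I_n & comm g u x] = min_start r.+1 x.
  by [].
rewrite /relaxed_start filter_map -map_comp -filter_predI.
rewrite (eq_filter (detour_msg_filter ^~ x)) [min_start r.+1 x]/=.
congr (minn _ (foldr _ _ _)); apply: eq_map => u; rewrite /comp send_stateK IH message_early //.
exact: leq_trans (min_start_le_n r u) (leq_pmull _ _).
Qed.

Definition best_received (sx : nat) (x : 'I_n) : nat :=
  if sx is sx'.+1 then
    if (x \in s :: ps) && (index x (s :: ps) < h) then pipelined sx' (index x (s :: ps)).+1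
    else 2 * n
  else 2 * n.

Lemma best_received_pv sx l : l <= h ->
  best_received sx.+1 (pv l) = if l < h then pipelined sx l.+1 else 2 * n.
Proof. by move=> le_l; rewrite /best_received pv_mem index_pv. Qed.

Lemma message_pv sx l : l <= h -> message (RPState (inp (pv l)) (zeta + sx)
  (min_start zeta (pv l)) (starts (pv l)) (best_received sx (pv l))) = pipelined sx l.
Proof.
move=> le_l; rewrite message_late; last exact: leq_addr.
rewrite input_pos pv_mem index_pv // [li_zeta _]/= addKn.
by case: sx => [|sx]; rewrite ?best_received_pv.
Qed.

Lemma msg_from_comm (F : 'I_n -> seq bool) {w x} : comm g w x ->
  msg_from (idf w) [seq (idf u, F u) | u <- enum 'I_n & comm g u x] = F w.
Proof.
move=> wx; rewrite /msg_from filter_map -map_comp.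
rewrite (eq_filter (a2 := pred1 w)) => [|u]; last by rewrite /= (inj_eq idf_inj).
have w_in : w \in [seq u <- enum 'I_n | comm g u x] by rewrite mem_filter wx mem_enum.
by rewrite filter_pred1_uniq // filter_uniq // enum_uniq.
Qed.

Lemma run_phase2 sx x : state (zeta + sx) x =
  RPState (inp x) (zeta + sx) (min_start zeta x) (starts x) (best_received sx x).
Proof.
elim: sx x => [|sx IH] x; first by rewrite addn0 run_phase1.
rewrite addnS run_succ IH recv_state_late; last exact: leq_addr.
congr (RPState _ _ _ _ _); rewrite /received_best input_pnext.
case: ifP => [/andP[x_in lt_x]|]; last by rewrite /best_received => ->.
have [k lt_k ->] : exists2 k, k < h & x = pv k by exists (index x (s :: ps)); rewrite ?pv_index.
have le_k := ltnW lt_k; rewrite index_pv // best_received_pv // lt_k.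
have comm_k : comm g (pv k.+1) (pv k).
  by rewrite /comm g_pv // orbT andbT eq_pv // gtn_eqF.
rewrite (msg_from_comm (fun u => send_state (state (zeta + sx) u) (idf (pv k))) comm_k).
by rewrite send_stateK IH message_pv //; apply: pipelined_ub.
Qed.

Lemma run_output i : i < h -> output_state (state (2 * zeta) (pv i)) =
  if pipelined zeta.-1 i.+1 < 2 * n then Some (pipelined zeta.-1 i.+1) else None.
Proof.
move=> lt_i; rewrite (_ : 2 * zeta = zeta + zeta.-1.+1); last by lia.
by rewrite run_phase2 /output_state (best_received_pv _ _ (ltnW lt_i)) lt_i.
Qed.

Lemma size_send_le r u w :
  size (send_state (state r u) w) <= 2 * nbits (n + \max_(x : 'I_n) idf x).
Proof.
rewrite size_send /msg_width /nbits.
by have := leq_trunc_log 2 (leq_addr (\max_(x : 'I_n) idf x) n); lia.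
Qed.

End ReplacementPaths.

Theorem proposition4p1 :
  exists (c_r c_b : nat) (A : congest_algo),
  forall (n : nat) (g : rel 'I_n) (s : 'I_n) (ps : seq 'I_n)
         (idf : 'I_n -> nat) (zeta : nat),
    injective idf ->
    shortest_path g s ps ->
    1 <= zeta ->
    (* O(log n)-bit messages in each of the c_r * zeta rounds *)
    (forall (r : nat) (u v : 'I_n), r < c_r * zeta -> comm g u v ->
       size (alg_send A (run g A idf (input g s ps idf zeta) r u) (idf v))
         <= c_b * nbits (n + \max_(x : 'I_n) idf x)) /\
    (* after c_r * zeta rounds, v_i outputs the answer for e_i = (v_i,v_{i+1}) *)
    (forall i : nat, i < size ps ->
       rp_value g s ps zeta i
         (alg_out A (run g A idf (input g s ps idf zeta) (c_r * zeta)
                        (pv s ps i)))).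
Proof.
exists 2, 2, rp_algo => n g s ps idf zeta idf_inj sp_P zeta_gt0; split.
  by move=> r u v _ _; apply: size_send_le.
by move=> i lt_i; rewrite [alg_out _ _]run_output //; apply: rp_value_pipelined.
Qed.
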